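(* Let $P$ be a finite poset. Then $S_N(S_N(P))$ is $N$-free. Moreover, $S_N(S_N(P))$ is the smallest $N$-free poset obtained as a barycentric subdivision of $\mathrm{Diag}(P)$: every $N$-free poset $Q$ obtained from a barycentric subdivision of $\mathrm{Diag}(P)$ contains $S_N(S_N(P))$, in the sense that every edge of $\mathrm{Diag}(P)$ on which a vertex is added in $S_N(S_N(P))$ also receives at least one added vertex in $Q$.
   Context: For a poset $P$, a covering pair is a pair $(x,y)$ with $x<y$ and no $z$ with $x<z<y$; we write $x\prec y$. $\mathrm{Diag}(P)$ is the directed graph on $P$ whose edges are the covering pairs. $\mathrm{Inc}(P)$ is the set of pairs of incomparable elements. Four elements $a,b,c,d$ of $P$ form an $N$ in $P$ if $b\prec c$, $a\prec c$, $b\prec d$ and $(a,d)\in\mathrm{Inc}(P)$; the pair $(b,c)$ is then the diagonal edge of this $N$. $P$ is $N$-free if it contains no $N$. $N_{diag}(P)$ denotes the set of diagonal edges of all $N$'s in $P$. A barycentric subdivision of $\mathrm{Diag}(P)$ consists of adding finitely many (possibly zero) new vertices on each edge of $\mathrm{Diag}(P)$ (a new vertex $u$ on edge $(x,y)$ subdivides it into $x\prec u\prec y$, several added vertices forming a chain); the resulting vertex set with the induced order (transitive closure) is a poset containing $P$ as a subposet. $S_N(P)$ is the poset obtained from $P$ by adding one new (dummy) vertex on each edge of $N_{diag}(P)$. *)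

From HB Require Import structures.
From mathcomp Require Import all_boot all_order.

Unset Printing Implicit Defensive.

(* A finite poset is given by a finite type T and its (reflexive) order
   relation [le : rel T].  All notions below are stated for an arbitrary
   such relation, so that they can be applied to P and to the posets
   obtained from P by subdivision. *)

Section Notions.
Variables (T : finType) (le : rel T).

Definition ltb (x y : T) : bool := (x != y) && le x y.

Definition coverb (x y : T) : bool :=
  ltb x y && [forall z, ~~ (ltb x z && ltb z y)].

Definition incomp (x y : T) : bool := ~~ le x y && ~~ le y x.

Definition isN (a b c d : T) : bool :=
  [&& coverb b c, coverb a c, coverb b d & incomp a d].

Definition Ndiag (b c : T) : bool := [exists a, exists d, isN a b c d].

Definition Nfree : Prop := forall a b c d, ~~ isN a b c d.

(* [k x y] new vertices are put on each covering edge (x, y); values of k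
   on non-covering pairs are irrelevant. *)
Definition subk (k : T -> T -> nat) (x y : T) : nat :=
  if coverb x y then k x y else 0.

(* vertex set: old vertices (inl) and, for each covering edge e,
   new vertices (inr (e, i)) with i < k e, forming the chain
   e.1 < (e,0) < (e,1) < ... < (e, k e - 1) < e.2 *)
Definition subV (k : T -> T -> nat) : finType :=
  (T + {e : T * T & 'I_(subk k e.1 e.2)})%type.

Definition substep (k : T -> T -> nat) (u v : subV k) : bool :=
  match u, v with
  | inl x, inl y => coverb x y && (subk k x y == 0)
  | inl x, inr q => ((tag q).1 == x) && (val (tagged q) == 0)
  | inr p, inr q => (tag p == tag q) && (val (tagged q) == (val (tagged p)).+1)
  | inr p, inl y => ((tag p).2 == y) && ((val (tagged p)).+1 == subk k (tag p).1 (tag p).2)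
  end.

Definition suble (k : T -> T -> nat) : rel (subV k) := connect (substep k).

Definition SNk (x y : T) : nat := if Ndiag x y then 1 else 0.
Definition SNV : finType := subV SNk.
Definition SNle : rel SNV := suble SNk.

End Notions.

Arguments ltb {T} le x y.
Arguments coverb {T} le x y.
Arguments incomp {T} le x y.
Arguments isN {T} le a b c d.
Arguments Ndiag {T} le b c.
Arguments Nfree {T} le.
Arguments subk {T} le k x y.
Arguments subV {T} le k.
Arguments substep {T} le k u v.
Arguments suble {T} le k u v.
Arguments SNk {T} le x y.
Arguments SNV {T} le.
Arguments SNle {T} le u v.

Definition SN2V {T : finType} (le : rel T) : finType := SNV (SNle le).
Definition SN2le {T : finType} (le : rel T) : rel (SN2V le) := SNle (SNle le).
Definition SN2emb {T : finType} (le : rel T) (x : T) : SN2V le := inl (inl x).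

Definition SN2_added {T : finType} (le : rel T) (x y : T) : Prop :=
  exists z : SN2V le,
    (forall w, z != SN2emb le w) /\
    ltb (@SN2le T le) (SN2emb le x) z /\ ltb (@SN2le T le) z (SN2emb le y).

From HB Require Import structures.
From mathcomp Require Import all_boot all_order.

Set Implicit Arguments.
Unset Strict Implicit.
Unset Printing Implicit Defensive.

(* The N's of a subdivision Q of Diag(P) can be described completely.  Their
   diagonal is an edge b < c of P left unsubdivided, such that c has another
   lower cover and b another upper cover, and either (b, c) is already an
   N-diagonal of P, or some other edge into c or out of b is subdivided; the new
   vertex of that edge next to c (resp. b) then completes the N.  In S_N(P) the
   subdivided edges are the N-diagonals of P, so the N-diagonals of S_N(P) are
   the edges (b, c) which are not N-diagonals of P but whose star (the edges
   into c and out of b) contains one.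

   Having an N-diagonal in its star passes from an edge (a, c) to any edge
   (b, c) with the same top: if the star of (b, c) contains no N-diagonal, every
   upper cover of a also covers b, so an N with diagonal (a, d) gives one with
   diagonal (b, d).  Dually for edges with a common bottom.  Hence an
   N-diagonal of S_N(S_N(P)), i.e. an edge (b, c) of P whose star in P is free
   of N-diagonals while its star in S_N(P) contains an N-diagonal (a, c) or
   (b, d) of S_N(P), cannot exist.

   Minimality: an N-free subdivision must subdivide every N-diagonal of P, hence,
   by the description of its N's, every edge of P that is an N-diagonal of
   S_N(P); these are all the edges of P subdivided in S_N(S_N(P)). *)

Section ConnectOrder.
Variables (V : finType) (e : rel V).

Lemma connect_sub_preorder (r : rel V) :
  reflexive r -> transitive r -> subrel e r -> subrel (connect e) r.
Proof.
move=> rR rT er u _ /connectP [p ep ->]; elim: p u ep => [|w p IH] u //= /andP [uw wp].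
exact: rT (er _ _ uw) (IH _ wp).
Qed.

Lemma connect_first_step u v : u != v -> connect e u v -> exists2 w, e u w & connect e w v.
Proof.
move=> nuv /connectP [[|w p] /= Hp Ev]; first by rewrite Ev eqxx in nuv.
by case/andP: Hp => uw wp; exists w => //; apply/connectP; exists p.
Qed.

Lemma coverb_connect :
  antisymmetric (connect e) -> irreflexive e ->
  (forall u v w, e u v -> e u w -> connect e w v -> w = v) ->
  coverb (connect e) =2 e.
Proof.
move=> eA eI first u v; apply/idP/idP.
  case/andP=> /andP [nuv /(connect_first_step nuv) [w uw wv]] /forallP nomid.
  have [<- // | nwv] := eqVneq w v.
  have nuw : u != w by apply: contraTneq uw => <-; rewrite eI.
  by move: (nomid w); rewrite /ltb nuw nwv (connect1 uw) wv.
move=> uv; rewrite /coverb /ltb (connect1 uv) andbT.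
have -> /= : u != v by apply: contraTneq uv => ->; rewrite eI.
apply/forallP => z; apply/negP => /andP [/andP [nuz uz] /andP [nzv zv]].
have [w uw wz] := connect_first_step nuz uz.
have Ew := first _ _ _ uv uw (connect_trans wz zv); subst w.
by move: nzv; rewrite (eA z v) ?eqxx // zv wz.
Qed.

End ConnectOrder.

Section Poset.
Variables (T : finType) (le : rel T).
Hypotheses (leR : reflexive le) (leA : antisymmetric le) (leT : transitive le).

Local Notation lt := (ltb le).
Local Notation cov := (coverb le).

Lemma ltbW x y : lt x y -> le x y.
Proof. by case/andP. Qed.

Lemma ltb_nge x y : lt x y -> ~~ le y x.
Proof. by case/andP=> nxy xy; apply: contra nxy => yx; apply/eqP/leA; rewrite xy yx. Qed.

Lemma ltb_le_trans x y z : lt x y -> le y z -> lt x z.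
Proof.
move=> xy yz; rewrite /ltb (leT (ltbW xy) yz) andbT.
by apply: contraTneq xy => ->; apply/negP => /ltb_nge; rewrite yz.
Qed.

Lemma coverbW x y : cov x y -> lt x y.
Proof. by case/andP. Qed.

Lemma coverb_nomid x y z : cov x y -> lt x z -> lt z y -> False.
Proof. by case/andP=> _ /forallP /(_ z); rewrite negb_and => /orP [] /negbTE ->. Qed.

Lemma coverb_le_eq x y z : cov x y -> cov x z -> le y z -> y = z.
Proof.
move=> xy xz yz; apply/eqP/negPn/negP => nyz.
by apply: coverb_nomid xz (coverbW xy) _; rewrite /ltb nyz.
Qed.

Lemma coverb_ge_eq x y z : cov x z -> cov y z -> le x y -> x = y.
Proof.
move=> xz yz xy; apply/eqP/negPn/negP => nxy.
by apply: coverb_nomid xz _ (coverbW yz); rewrite /ltb nxy.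
Qed.

Lemma coverb_zigzag_nge a b c d : cov b c -> cov a c -> cov b d -> ~~ le d a.
Proof.
move=> bc ac bd; apply/negP => da.
exact: coverb_nomid bc (ltb_le_trans (coverbW bd) da) (coverbW ac).
Qed.

Lemma le_connect_coverb x y : le x y -> connect cov x y.
Proof.
have [n] := ubnP #|[pred w | le x w && le w y]|.
elim: n x y => // n IH x y; rewrite ltnS => itv xy.
have [-> | nxy] := eqVneq x y; first exact: connect0.
have [cxy | ncov] := boolP (cov x y); first exact: connect1.
rewrite /coverb {1}/ltb nxy xy /= in ncov.
case/forallPn: ncov => z; rewrite negbK => /andP [xz zy].
have shrink u v w : le x u -> le v y -> le x w && le w y -> ~~ (le u w && le w v) ->
    #|[pred t | le u t && le t v]| < n.
  move=> xu vy wxy wuv; apply: leq_trans _ itv; apply: proper_card; apply/properP.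
  split; last by exists w.
  by apply/subsetP => t; rewrite !inE => /andP [ut tv]; rewrite (leT xu ut) (leT tv vy).
apply: connect_trans (IH x z _ (ltbW xz)) (IH z y _ (ltbW zy)).
  by apply: (shrink x z y); rewrite ?leR ?xy ?(ltbW zy) ?(negbTE (ltb_nge zy)) ?andbF.
by apply: (shrink z y x); rewrite ?leR ?xy ?(ltbW xz) ?(negbTE (ltb_nge xz)).
Qed.

Lemma ltb_coverb_le x y : lt x y -> exists2 v, cov x v & le v y.
Proof.
case/andP => nxy /le_connect_coverb /(connect_first_step nxy) [v xv vy].
by exists v => //; apply: connect_sub_preorder leR leT _ _ _ vy => u w /coverbW /ltbW.
Qed.

End Poset.

Section Stars.
Variables (T : finType) (le : rel T).

Local Notation cov := (coverb le).

Definition wedge (b c : T) : bool :=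
  [exists a, (a != b) && cov a c] && [exists d, (d != c) && cov b d].

Definition star_marked (m : rel T) (b c : T) : bool :=
  [exists a, cov a c && m a c] || [exists d, cov b d && m b d].

Lemma star_markedL (m : rel T) a b c : cov a c -> m a c -> star_marked m b c.
Proof. by move=> ac mac; apply/orP; left; apply/existsP; exists a; rewrite ac. Qed.

Lemma star_markedR (m : rel T) b c d : cov b d -> m b d -> star_marked m b c.
Proof. by move=> bd mbd; apply/orP; right; apply/existsP; exists d; rewrite bd. Qed.

Lemma star_marked_mono (m m' : rel T) b c :
  subrel m m' -> star_marked m b c -> star_marked m' b c.
Proof.
move=> mm' /orP [] /existsP [x /andP [cx /mm' mx]];
  [exact: star_markedL cx mx | exact: star_markedR cx mx].
Qed.

Lemma eq_star_marked (m m' : rel T) : m =2 m' -> star_marked m =2 star_marked m'.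
Proof. by move=> E b c; apply/idP/idP; apply: star_marked_mono => x y; rewrite E. Qed.

Lemma coverb_le x y : cov x y -> le x y.
Proof. by case/andP=> /andP []. Qed.

Lemma isN_neq a b c d : isN le a b c d -> (a != b) && (d != c).
Proof.
case/and4P=> _ ac bd /andP [nad _].
by apply/andP; split; apply: contraNneq nad => ->; apply: coverb_le.
Qed.

Lemma Ndiag_coverb b c : Ndiag le b c -> cov b c.
Proof. by case/existsP=> a /existsP [d /and4P []]. Qed.

Lemma Ndiag_wedge b c : Ndiag le b c -> wedge b c.
Proof.
case/existsP=> a /existsP [d N]; case/andP: (isN_neq N) => ab dc.
case/and4P: N => _ ac bd _.
by apply/andP; split; apply/existsP; [exists a | exists d]; apply/andP.
Qed.

Lemma Ndiag_cover_transfer a b d :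
  (forall u, cov a u -> cov b u) -> Ndiag le a d -> Ndiag le b d.
Proof.
move=> ab /existsP [x /existsP [y /and4P [ad xd ay xy]]].
by apply/existsP; exists x; apply/existsP; exists y; rewrite /isN (ab _ ad) (ab _ ay) xd xy.
Qed.

End Stars.

Arguments wedge {T} le b c.
Arguments star_marked {T} le m b c.

Section Duality.
Variables (T : finType) (le : rel T).

Local Notation ge := (fun x y => le y x).

Lemma coverb_flip x y : coverb ge x y = coverb le y x.
Proof.
rewrite /coverb /ltb eq_sym; congr (_ && _); apply: eq_forallb => z.
by rewrite andbC (eq_sym x z) (eq_sym z y).
Qed.

Lemma isN_flip a b c d : isN ge a b c d = isN le d c b a.
Proof. by rewrite /isN !coverb_flip; congr (_ && _); apply: andbCA. Qed.

Lemma Ndiag_flip b c : Ndiag ge b c = Ndiag le c b.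
Proof.
apply/existsP/existsP => [[a /existsP [d N]] | [d /existsP [a N]]].
  by exists d; apply/existsP; exists a; rewrite -isN_flip.
by exists a; apply/existsP; exists d; rewrite isN_flip.
Qed.

Lemma star_Ndiag_flip b c :
  star_marked ge (Ndiag ge) b c = star_marked le (Ndiag le) c b.
Proof.
rewrite /star_marked orbC; congr (_ || _); apply: eq_existsb => x.
  by rewrite coverb_flip Ndiag_flip.
by rewrite coverb_flip Ndiag_flip.
Qed.

End Duality.

Section NConfigurations.
Variables (T : finType) (le : rel T).
Hypotheses (leR : reflexive le) (leA : antisymmetric le) (leT : transitive le).

Local Notation lt := (ltb le).
Local Notation cov := (coverb le).

Lemma nNdiag_comparable a b c d :
  ~~ Ndiag le b c -> cov b c -> cov a c -> cov b d -> le a d || le d a.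
Proof.
move=> nN bc ac bd; move: nN; apply: contraR; rewrite negb_or => inc.
by apply/existsP; exists a; apply/existsP; exists d; rewrite /isN bc ac bd.
Qed.

Lemma coverb_up_shared a b c u :
  cov a c -> cov b c -> a != b -> ~~ star_marked le (Ndiag le) b c -> cov a u -> cov b u.
Proof.
move=> ac bc nab nstar au.
have nNac : ~~ Ndiag le a c by apply: contra nstar; exact: star_markedL ac.
have nNb d : cov b d -> ~~ Ndiag le b d by move=> bd; apply: contra nstar; exact: star_markedR bd.
have nab' : ~~ lt a b by apply/negP => ab; exact: coverb_nomid ac ab (coverbW bc).
have nba : ~~ lt b a by apply/negP => ba; exact: coverb_nomid bc ba (coverbW ac).
have bu : lt b u.
  have /orP [bu | ub] := nNdiag_comparable nNac ac bc au.
    by rewrite /ltb bu andbT; apply: contraNneq nab' => ->; exact: coverbW au.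
  by move: nab'; rewrite (ltb_le_trans leA leT (coverbW au) ub).
rewrite /coverb bu; apply/forallP => z; apply/negP => /andP [bz zu].
have [v bv vz] := ltb_coverb_le leR leA leT bz.
have /orP [av | va] := nNdiag_comparable (nNb c bc) bc ac bv.
  have nav : a != v by apply: contraNneq nba => ->; exact: coverbW bv.
  have ltav : lt a v by rewrite /ltb nav av.
  exact: coverb_nomid au (ltb_le_trans leA leT ltav vz) zu.
by move: nba; rewrite (ltb_le_trans leA leT (coverbW bv) va).
Qed.

Lemma star_Ndiag_common_top a b c :
  cov a c -> cov b c -> star_marked le (Ndiag le) a c -> star_marked le (Ndiag le) b c.
Proof.
move=> ac bc; have [<- // | nab] := eqVneq a b.
apply: contraTT => nstar; have shared := coverb_up_shared ac bc nab nstar.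
rewrite /star_marked negb_or !negb_exists; apply/andP; split; apply/forallP => x;
  apply/negP => /andP [xc N]; case/negP: nstar.
  exact: star_markedL xc N.
exact: star_markedR (shared _ xc) (Ndiag_cover_transfer shared N).
Qed.

End NConfigurations.

Lemma star_Ndiag_common_bottom (T : finType) (le : rel T) :
  reflexive le -> antisymmetric le -> transitive le ->
  forall b c d, coverb le b c -> coverb le b d ->
  star_marked le (Ndiag le) b d -> star_marked le (Ndiag le) b c.
Proof.
move=> leR leA leT b c d bc bd.
have geA : antisymmetric (fun x y => le y x) by move=> x y; rewrite andbC => /leA.
have geT : transitive (fun x y => le y x) by move=> y x z xy yz; exact: leT yz xy.
rewrite -(star_Ndiag_flip le d b) -(star_Ndiag_flip le c b).
by apply: (star_Ndiag_common_top (le := fun x y => le y x) leR geA geT); rewrite coverb_flip.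
Qed.

Section Subdivision.
Variables (T : finType) (le : rel T).
Hypotheses (leR : reflexive le) (leA : antisymmetric le) (leT : transitive le).
Variable k : T -> T -> nat.

Local Notation cov := (coverb le).
Local Notation V := (subV le k).
Local Notation st := (substep le k).
Local Notation sle := (suble le k).
Local Notation marked := (fun x y => 0 < subk le k x y).

Definition lo (u : V) : T := match u with inl x => x | inr p => (tag p).1 end.
Definition hi (u : V) : T := match u with inl x => x | inr p => (tag p).2 end.
Definition idx (u : V) : nat := if u is inr p then (val (tagged p)).+1 else 0.

Definition sub_below (u v : V) : bool :=
  le (hi u) (lo v) || [&& lo u == lo v, hi u == hi v & idx u <= idx v].

Lemma subk_gt0_coverb x y : 0 < subk le k x y -> cov x y.
Proof. by rewrite /subk; case: ifP. Qed.

Lemma edge_subk_gt0 x y (i : 'I_(subk le k x y)) : 0 < subk le k x y.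
Proof. exact: leq_ltn_trans (leq0n _) (ltn_ord i). Qed.

Lemma edge_coverb x y (i : 'I_(subk le k x y)) : cov x y.
Proof. exact/subk_gt0_coverb/(edge_subk_gt0 i). Qed.

Lemma lo_le_hi u : le (lo u) (hi u).
Proof. by case: u => [x|[e i]] /=; [exact: leR | exact/coverb_le/(edge_coverb i)]. Qed.

Lemma hi_le_lo u : le (hi u) (lo u) -> u = inl (lo u).
Proof. by case: u => [//|[e i]] /=; rewrite (negbTE (ltb_nge leA (coverbW (edge_coverb i)))). Qed.

Lemma vertex_eq u v : lo u = lo v -> hi u = hi v -> idx u = idx v -> u = v.
Proof.
case: u v => [x|[[x y] i]] [x'|[[x' y'] j]] /= Ex Ey Ei //; first by rewrite Ex.
by subst x' y'; case: Ei => /ord_inj ->.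
Qed.

Lemma sub_below_refl : reflexive sub_below.
Proof. by move=> u; rewrite /sub_below !eqxx leqnn orbT. Qed.

Lemma sub_below_trans : transitive sub_below.
Proof.
move=> v u w; rewrite /sub_below.
case/orP=> [uv | /and3P [/eqP-> /eqP-> uv]] /orP [vw | /and3P [/eqP<- /eqP<- vw]].
- by rewrite (leT (leT uv (lo_le_hi v)) vw).
- by rewrite uv.
- by rewrite vw.
- by rewrite !eqxx (leq_trans uv vw) orbT.
Qed.

Lemma substep_below u v : st u v -> sub_below u v.
Proof.
rewrite /sub_below; case: u v => [x|[[x y] i]] [x'|[[x' y'] j]] /=.
- by case/andP=> /coverb_le ->.
- by case/andP=> /eqP <- _; rewrite leR.
- by case/andP=> /eqP <- _; rewrite leR.
by case/andP=> /eqP [Ex Ey] /eqP Ej; subst x' y'; rewrite Ej !eqxx leqnSn orbT.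
Qed.

Lemma suble_below u v : sle u v -> sub_below u v.
Proof. exact/connect_sub_preorder/substep_below/sub_below_trans/sub_below_refl. Qed.

Lemma sub_below_anti u v : sub_below u v -> sub_below v u -> u = v.
Proof.
rewrite /sub_below => /orP [uv | /and3P [/eqP lo_uv /eqP hi_uv idx_uv]].
  case/orP=> [vu | /and3P [/eqP lo_vu /eqP hi_vu _]].
    have Eu := hi_le_lo (leT uv (leT (lo_le_hi v) vu)).
    have Ev := hi_le_lo (leT vu (leT (lo_le_hi u) uv)).
    rewrite Eu Ev; congr inl; apply: leA.
    by rewrite (leT (lo_le_hi u) uv) (leT (lo_le_hi v) vu).
  rewrite lo_vu in uv; have Eu := hi_le_lo uv.
  have Ev : v = inl (lo v) by apply: hi_le_lo; rewrite hi_vu lo_vu.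
  by rewrite Eu Ev lo_vu.
case/orP=> [vu | /and3P [_ _ idx_vu]].
  rewrite lo_uv in vu; have Ev := hi_le_lo vu.
  have Eu : u = inl (lo u) by apply: hi_le_lo; rewrite hi_uv lo_uv.
  by rewrite Eu Ev lo_uv.
by apply: vertex_eq => //; apply/eqP; rewrite eqn_leq idx_uv idx_vu.
Qed.

Lemma suble_refl : reflexive sle.
Proof. exact: connect0. Qed.

Lemma suble_trans : transitive sle.
Proof. exact: connect_trans. Qed.

Lemma suble_anti : antisymmetric sle.
Proof. by move=> u v /andP [/suble_below uv /suble_below vu]; exact: sub_below_anti. Qed.

Lemma suble_lo u : sle (inl (lo u)) u.
Proof.
case: u => [x|[[x y] [i lti]]] /=; first exact: connect0.
elim: i lti => [|i IH] lti; first by apply: connect1; rewrite /= !eqxx.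
by apply: connect_trans (IH (ltnW lti)) (connect1 _); rewrite /= !eqxx.
Qed.

Lemma substep_to_inl_exists a0 c : cov a0 c ->
  exists a, [/\ st a (inl c), lo a = a0 & hi a = if 0 < subk le k a0 c then c else a0].
Proof.
move=> ac; have [k0 | kpos] := posnP (subk le k a0 c).
  by exists (inl a0); rewrite /= ac k0.
have top : (subk le k a0 c).-1 < subk le k a0 c by rewrite ltn_predL.
by exists (inr (existT _ (a0, c) (Ordinal top))); rewrite /= (prednK kpos) !eqxx.
Qed.

Lemma substep_from_inl_exists b d0 : cov b d0 ->
  exists d, [/\ st (inl b) d, hi d = d0 & lo d = if 0 < subk le k b d0 then b else d0].
Proof.
move=> bd; have [k0 | kpos] := posnP (subk le k b d0).
  by exists (inl d0); rewrite /= bd k0.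
by exists (inr (existT _ (b, d0) (Ordinal kpos))); rewrite /= !eqxx.
Qed.

Lemma coverb_suble x y : cov x y -> sle (inl x) (inl y).
Proof.
case/substep_to_inl_exists => a [ay <- _].
exact: connect_trans (suble_lo a) (connect1 ay).
Qed.

Lemma suble_inl x y : sle (inl x) (inl y) = le x y.
Proof.
apply/idP/idP => [/suble_below | /(le_connect_coverb leR leA leT)].
  by rewrite /sub_below /= => /orP [// | /and3P [/eqP -> _ _]].
apply: (connect_sub_preorder (r := fun x y => sle (inl x) (inl y))) => //.
- by move=> z; exact: suble_refl.
- by move=> z w v; exact: suble_trans.
exact: coverb_suble.
Qed.

Lemma substep_irr : irreflexive st.
Proof. by case=> [x|p] /=; rewrite ?/coverb ?/ltb eqxx // (ltn_eqF (ltnSn _)). Qed.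

Lemma substep_from_inr_uniq p v w : st (inr p) v -> st (inr p) w -> v = w.
Proof.
case: p => [[x y] i]; case: v w => [v|[[x1 y1] j]] [w|[[x2 y2] l]] /=.
- by case/andP=> /eqP <- _ /andP [/eqP <- _].
- case/andP=> _ /eqP Elast /andP [/eqP [E1 E2] /eqP El]; subst x2 y2.
  by move: (ltn_ord l); rewrite El Elast ltnn.
- case/andP=> /eqP [E1 E2] /eqP Ej /andP [_ /eqP Elast]; subst x1 y1.
  by move: (ltn_ord j); rewrite Ej Elast ltnn.
case/andP=> /eqP [E1 E2] /eqP Ej /andP [/eqP [E3 E4] /eqP El]; subst x1 y1 x2 y2.
by apply: vertex_eq => //=; rewrite Ej El.
Qed.

Lemma substep_to_inr_uniq q u w : st u (inr q) -> st w (inr q) -> u = w.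
Proof.
case: q => [[x y] i]; case: u w => [u|[[x1 y1] j]] [w|[[x2 y2] l]] /=.
- by case/andP=> /eqP <- _ /andP [/eqP <- _].
- by case/andP=> _ /eqP -> /andP [_ /eqP].
- by case/andP=> _ /eqP -> /andP [_ /eqP].
case/andP=> /eqP [E1 E2] /eqP Ej /andP [/eqP [E3 E4] /eqP El]; subst x1 y1 x2 y2.
by apply: vertex_eq => //=; apply: succn_inj; rewrite -Ej -El.
Qed.

Lemma substep_first u v w : st u v -> st u w -> sle w v -> w = v.
Proof.
case: u => [x|p]; last by move=> uv uw _; exact: substep_from_inr_uniq uw uv.
case: v => [y|[[x1 y1] i]]; case: w => [z|[[x2 z2] j]] /=.
- by case/andP=> xy _ /andP [xz _]; rewrite suble_inl => /(coverb_le_eq xz xy) ->.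
- case/andP=> xy /eqP k0 /andP [/eqP Ex _]; subst x2.
  move=> /suble_below; rewrite /sub_below /= ltn0 !andbF orbF => zy.
  have Ey := coverb_le_eq (edge_coverb (j : 'I_(subk le k x z2))) xy zy; subst y.
  by exfalso; move: (edge_subk_gt0 j); rewrite k0.
- case/andP=> /eqP Ex _ /andP [/coverbW xz _]; subst x1.
  move=> /suble_below; rewrite /sub_below /= (negbTE (ltb_nge leA xz)) /=.
  by case/and3P=> /eqP Ezx; rewrite Ezx /ltb eqxx in xz.
case/andP=> /eqP Ex /eqP i0 /andP [/eqP Ex2 /eqP j0]; subst x1 x2.
have xz := coverbW (edge_coverb (j : 'I_(subk le k x z2))).
move=> /suble_below; rewrite /sub_below /= (negbTE (ltb_nge leA xz)) /=.
by case/and3P=> _ /eqP Ez _; subst z2; apply: vertex_eq => //=; rewrite i0 j0.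
Qed.

Lemma suble_coverb : coverb sle =2 st.
Proof. exact: coverb_connect suble_anti substep_irr substep_first. Qed.

Lemma substep_to_inl a c :
  st a (inl c) -> cov (lo a) c /\ (a == inl (lo a)) = (subk le k (lo a) c == 0).
Proof.
case: a => [x|[[x y] i]] /=; first by case/andP=> -> /eqP ->; rewrite !eqxx.
case/andP=> /eqP <- _; split; first exact: edge_coverb i.
by rewrite eqn0Ngt (edge_subk_gt0 i).
Qed.

Lemma substep_from_inl b d :
  st (inl b) d -> cov b (hi d) /\ (d == inl (hi d)) = (subk le k b (hi d) == 0).
Proof.
case: d => [y|[[x y] i]] /=; first by case/andP=> -> /eqP ->; rewrite !eqxx.
case/andP=> /eqP Ex _; subst x; split; first exact: edge_coverb i.
by rewrite eqn0Ngt (edge_subk_gt0 i).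
Qed.

Lemma wedge_sub u v : coverb sle u v -> wedge sle u v ->
  exists b c, [/\ u = inl b, v = inl c, cov b c, subk le k b c = 0 & wedge le b c].
Proof.
rewrite suble_coverb => uv /andP [/existsP [a /andP [au av]] /existsP [d /andP [dv ud]]].
rewrite suble_coverb in av; rewrite suble_coverb in ud.
case: u uv au ud => [b|p] uv au ud; last first.
  by move: dv; rewrite (substep_from_inr_uniq ud uv) eqxx.
case: v uv av dv => [c|q] uv av dv; last first.
  by move: au; rewrite (substep_to_inr_uniq av uv) eqxx.
case/andP: (uv) => bc /eqP k0; exists b, c; split => //.
have [ac Ea] := substep_to_inl av; have [bd Ed] := substep_from_inl ud.
apply/andP; split; apply/existsP; [exists (lo a) | exists (hi d)]; rewrite ?ac ?bd andbT.
  by apply: contraNneq au => Eb; rewrite -Eb Ea Eb k0.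
by apply: contraNneq dv => Ec; rewrite -Ec Ed Ec k0.
Qed.

Lemma Ndiag_sub_old u v : Ndiag sle u v -> exists b c, u = inl b /\ v = inl c.
Proof.
move=> N; have [b [c [-> -> _ _ _]]] := wedge_sub (Ndiag_coverb N) (Ndiag_wedge N).
by exists b, c.
Qed.

Lemma incomp_sub a d :
  ~~ le (hi a) (lo d) -> ~~ le (hi d) (lo a) -> lo a != lo d -> incomp sle a d.
Proof.
move=> ad da nlo; apply/andP; split; apply/negP => /suble_below.
  by rewrite /sub_below (negbTE ad) (negbTE nlo).
by rewrite /sub_below (negbTE da) eq_sym (negbTE nlo).
Qed.

(* The two [if]s are the top of the vertex just below [c] on the edge [(a0, c)]
   and the bottom of the vertex just above [b] on the edge [(b, d0)]. *)
Lemma Ndiag_sub_lift a0 b c d0 :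
  cov b c -> subk le k b c = 0 -> cov a0 c -> cov b d0 -> a0 != b ->
  ~~ le (if 0 < subk le k a0 c then c else a0) (if 0 < subk le k b d0 then b else d0) ->
  Ndiag sle (inl b) (inl c).
Proof.
move=> bc k0 ac bd ab sep.
have [a [ac' loa hia]] := substep_to_inl_exists ac.
have [d [bd' hid lod]] := substep_from_inl_exists bd.
have da : ~~ le d0 a0 := coverb_zigzag_nge leA leT bc ac bd.
apply/existsP; exists a; apply/existsP; exists d.
rewrite /isN !suble_coverb ac' bd' /= bc k0 eqxx /=.
apply: incomp_sub; rewrite ?hia ?lod ?loa ?hid //.
by case: ifP => _ //; apply: contraNneq da => ->; exact: leR.
Qed.

Lemma Ndiag_sub_inlE b c : Ndiag sle (inl b) (inl c) =
  [&& cov b c, subk le k b c == 0, wedge le b c & Ndiag le b c || star_marked le marked b c].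
Proof.
apply/idP/idP => [N | /and4P [bc /eqP k0 w]].
  have [b' [c' [[<-] [<-] bc k0 w]]] := wedge_sub (Ndiag_coverb N) (Ndiag_wedge N).
  rewrite bc k0 w eqxx /=.
  case/existsP: N => a /existsP [d /and4P [_ ac bd ad]]; rewrite !suble_coverb in ac bd.
  have [ac0 Ea] := substep_to_inl ac; have [bd0 Ed] := substep_from_inl bd.
  have [ka | ka] := posnP (subk le k (lo a) c); last by rewrite (star_markedL _ ac0 ka) orbT.
  have [kd | kd] := posnP (subk le k b (hi d)); last by rewrite (star_markedR _ bd0 kd) orbT.
  have Ea0 : a = inl (lo a) by apply/eqP; rewrite Ea ka.
  have Ed0 : d = inl (hi d) by apply/eqP; rewrite Ed kd.
  move: ad; rewrite Ea0 Ed0 /incomp !suble_inl => ad; apply/orP; left.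
  by apply/existsP; exists (lo a); apply/existsP; exists (hi d); rewrite /isN bc ac0 bd0.
case/andP: w => /existsP [aw /andP [awb awc]] /existsP [dw /andP [dwc bdw]].
have below_top x : cov x c -> le x (if 0 < subk le k x c then c else x).
  by case: ifP => _ xc; [exact: coverb_le | exact: leR].
have top_below y : cov b y -> le (if 0 < subk le k b y then b else y) y.
  by case: ifP => _ By; [exact: coverb_le | exact: leR].
case/orP=> [N | /orP [] /existsP [x /andP [xc kx]]].
- case/existsP: N => a0 /existsP [d0 N].
  case/andP: (isN_neq N) => ab _; case/and4P: N => _ ac bd /andP [nad _].
  apply: (Ndiag_sub_lift bc k0 ac bd ab); apply: contra nad => le_top.
  exact: leT (below_top _ ac) (leT le_top (top_below _ bd)).
- have xb : x != b by apply: contraTneq kx => ->; rewrite k0.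
  apply: (Ndiag_sub_lift bc k0 xc bdw xb); rewrite kx; apply/negP => cY.
  by move: dwc; rewrite (coverb_le_eq bc bdw (leT cY (top_below _ bdw))) eqxx.
apply: (Ndiag_sub_lift bc k0 awc xc awb); rewrite kx; apply/negP => Xb.
by move: awb; rewrite (coverb_ge_eq awc bc (leT (below_top _ awc) Xb)) eqxx.
Qed.

Lemma Nfree_subk_gt0 b c : Nfree sle -> cov b c -> wedge le b c ->
  Ndiag le b c || star_marked le marked b c -> 0 < subk le k b c.
Proof.
move=> free bc w m; rewrite lt0n; apply/negP => k0.
have /existsP [a /existsP [d N]] : Ndiag sle (inl b) (inl c) by rewrite Ndiag_sub_inlE bc k0 w m.
by have := free a (inl b) (inl c) d; rewrite N.
Qed.

End Subdivision.

Lemma subk_SNk_gt0 (T : finType) (le : rel T) x y :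
  (0 < subk le (SNk le) x y) = Ndiag le x y.
Proof.
rewrite /subk /SNk; case: ifP => [_ | nxy]; first by case: (Ndiag le x y).
by apply/esym/negbTE; apply: contraFN nxy; exact: Ndiag_coverb.
Qed.

Section SingleSN.
Variables (T : finType) (le : rel T).
Hypotheses (leR : reflexive le) (leA : antisymmetric le) (leT : transitive le).

Local Notation cov := (coverb le).

Lemma coverb_SN_inl x y : coverb (SNle le) (inl x) (inl y) = cov x y && ~~ Ndiag le x y.
Proof. by rewrite (suble_coverb leR leA leT) /= eqn0Ngt subk_SNk_gt0. Qed.

Lemma Ndiag_SN_inlE b c : Ndiag (SNle le) (inl b) (inl c) =
  [&& cov b c, ~~ Ndiag le b c, wedge le b c & star_marked le (Ndiag le) b c].
Proof.
rewrite (Ndiag_sub_inlE leR leA leT) eqn0Ngt subk_SNk_gt0.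
rewrite (eq_star_marked le (@subk_SNk_gt0 T le)).
by case: (Ndiag le b c); rewrite ?andbF.
Qed.

Lemma nstar_Ndiag_SN_inl b c : cov b c -> ~~ star_marked le (Ndiag le) b c ->
  ~~ star_marked (SNle le) (Ndiag (SNle le)) (inl b) (inl c).
Proof.
move=> bc; apply: contra => /orP [] /existsP [x /andP [_ N]].
  have [a [c' [Ex [Ec]]]] := Ndiag_sub_old leR leA leT N; subst x c'.
  move: N; rewrite Ndiag_SN_inlE => /and4P [ac _ _ s].
  exact (star_Ndiag_common_top leR leA leT ac bc s).
have [b' [d [[Eb] Ex]]] := Ndiag_sub_old leR leA leT N; subst x b'.
move: N; rewrite Ndiag_SN_inlE => /and4P [bd _ _ s].
exact (star_Ndiag_common_bottom leR leA leT bc bd s).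
Qed.

End SingleSN.

Section DoubleSN.
Variables (T : finType) (le : rel T).
Hypotheses (leR : reflexive le) (leA : antisymmetric le) (leT : transitive le).

Local Notation cov := (coverb le).

Let SN_refl : reflexive (SNle le) := @suble_refl T le (SNk le).
Let SN_anti : antisymmetric (SNle le) := @suble_anti T le leR leA leT (SNk le).
Let SN_trans : transitive (SNle le) := @suble_trans T le (SNk le).

Lemma SN2_Nfree : Nfree (SN2le le).
Proof.
move=> a b c d; apply/negP => N2.
have {N2} : Ndiag (SN2le le) b c by apply/existsP; exists a; apply/existsP; exists d.
move=> N2; have [b1 [c1 [Eb Ec]]] := Ndiag_sub_old SN_refl SN_anti SN_trans N2; subst b c.
move: N2; rewrite /SN2le (Ndiag_SN_inlE SN_refl SN_anti SN_trans).
case/and4P=> bc1 nN1 w1 s1.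
have [b0 [c0 [Eb Ec bc k0 w]]] := wedge_sub leR leA leT bc1 w1; subst b1 c1.
have nN : ~~ Ndiag le b0 c0 by rewrite -subk_SNk_gt0 k0.
have ns : ~~ star_marked le (Ndiag le) b0 c0.
  by move: nN1; rewrite (Ndiag_SN_inlE leR leA leT) bc nN w.
by rewrite (negbTE (nstar_Ndiag_SN_inl leR leA leT bc ns)) in s1.
Qed.

Lemma SN2_added_subk_gt0 k x y :
  Nfree (suble le k) -> cov x y -> SN2_added le x y -> 0 < k x y.
Proof.
move=> free xy [z [_ [xz zy]]].
have Ndiag_gt0 : subrel (Ndiag le) (fun u v => 0 < subk le k u v).
  move=> u v N; apply: (Nfree_subk_gt0 leR leA leT free (Ndiag_coverb N) (Ndiag_wedge N)).
  by rewrite N.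
have -> : k x y = subk le k x y by rewrite /subk xy.
have [N | nN] := boolP (Ndiag le x y); first exact: Ndiag_gt0.
have : Ndiag (SNle le) (inl x) (inl y).
  apply: contraT => nN1.
  have xy2 : coverb (SN2le le) (SN2emb le x) (SN2emb le y).
    rewrite /SN2le (coverb_SN_inl SN_refl SN_anti SN_trans).
    by rewrite (coverb_SN_inl leR leA leT) xy nN nN1.
  by case: (coverb_nomid xy2 xz zy).
rewrite (Ndiag_SN_inlE leR leA leT) => /and4P [_ _ w s].
apply: (Nfree_subk_gt0 leR leA leT free xy w).
by rewrite (star_marked_mono Ndiag_gt0 s) orbT.
Qed.

End DoubleSN.

Theorem theorem1 (d : Order.disp_t) (T : finPOrderType d) :
  Nfree (SN2le (fun x y : T => (x <= y)%O)) /\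
  (forall k : T -> T -> nat,
     Nfree (suble (fun x y : T => (x <= y)%O) k) ->
     forall x y : T, coverb (fun x y : T => (x <= y)%O) x y ->
       SN2_added (fun x y : T => (x <= y)%O) x y -> 0 < k x y).
Proof.
have leR : reflexive (fun x y : T => (x <= y)%O) := @Order.POrderTheory.lexx _ T.
have leA : antisymmetric (fun x y : T => (x <= y)%O) := @Order.POrderTheory.le_anti _ T.
have leT : transitive (fun x y : T => (x <= y)%O) := @Order.POrderTheory.le_trans _ T.
split; first exact: SN2_Nfree leR leA leT.
by move=> k free x y; exact: (SN2_added_subk_gt0 leR leA leT free).
Qed.
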